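(* Let $\textsc{All}$ denote the set of all languages $L \subseteq \{0,1\}^*$. Then $\mathrm{T}_s(\mathbb{Q}) = \textsc{All}$; that is, for every language $L \subseteq \{0,1\}^*$ there exists a transformer over the rational datatype $\mathbb{Q}$ with (strong) saturated attention, size-preserving embedding function and size-preserving activation functions, which recognizes $L$.
   Context: Datatypes. All values are binary strings. An integer is encoded as a sign bit followed by binary magnitude bits; an unsigned integer omits the sign bit. A rational $r \in \mathbb{Q}$ is encoded as a sign bit $s$ together with a pair $\langle p,q\rangle$ of unsigned integers (padded to equal length and interleaved), representing $(2s-1)p/q$; addition and multiplication are the usual ones followed by reduction to lowest terms ($p,q$ divided by $\gcd(p,q)$). The size $|x|$ of a value $x$ is its length in bits. A function $f:\{0,1\}^*\to\{0,1\}^*$ is size-preserving if there are constants $c,N$ such that $|f(x)| \le c|x|$ for all $x$ with $|x|\ge N$; $\mathcal S$ denotes the set of size-preserving functions (applied to numbers/vectors via their binary encodings; an input pair $(\sigma,i)\in\Sigma\times\mathbb N$ is likewise viewed as a bitstring). Saturated attention. For a score vector $a\in\mathbb D^n$ let $\mathcal M(a)=\{i : a_i=\max_j a_j\}$ and $s(a)_j = 1/|\mathcal M(a)|$ if $j\in\mathcal M(a)$ and $0$ otherwise. Transformer. Over datatype $\mathbb D$ with finite alphabet $\Sigma$, model dimension $k$, $L$ layers and $H$ heads per layer, a transformer consists of an embedding function $\phi:\Sigma\times\mathbb N\to\mathbb D^k$ in $\mathcal S$, scoring functions $s_{\ell,h}:\mathbb D^k\times\mathbb D^k\to\mathbb D$,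 and activation functions $f_\ell$ in $\mathcal S$. On input $w\in\Sigma^n$: $v_{0,i}=\phi(w_i,i)$; $a_{\ell,h,i,j}=s_{\ell,h}(v_{\ell,i},v_{\ell,j})$; the head output is $b_{\ell+1,h,i}=\sum_{j=1}^n \alpha(a_{\ell,h,i,\cdot})_j\, v_{\ell,j}$ with $\alpha$ the attention function and all arithmetic in $\mathbb D$; and $v_{\ell+1,i}=f_{\ell+1}(v_{\ell,i}, b_{\ell+1,1,i},\dots,b_{\ell+1,H,i})$. The transformer recognizes $L\subseteq\Sigma^*$ if there is a rational affine map $W,b$ with $W\cdot v_{L,1}(w)+b>0 \iff w\in L$ for all $w\in\Sigma^*$. $\mathrm T_\alpha(\mathbb D)$ is the class of languages recognized by some such transformer with attention function $\alpha$, datatype $\mathbb D$, some $k$, and embedding and activation functions in $\mathcal S$. *)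

From HB Require Import structures.
From mathcomp Require Import all_boot all_order all_algebra.
Set Implicit Arguments. Unset Strict Implicit. Unset Printing Implicit Defensive.
Import Order.TTheory GRing.Theory Num.Theory.
Local Open Scope ring_scope.

(* binary representation (most significant bit first, no leading zeros) *)
Fixpoint bin_aux (fuel n : nat) : seq bool :=
  match fuel with
  | 0 => [::]
  | f.+1 => if n is 0 then [::] else rcons (bin_aux f n./2) (odd n)
  end.

Definition enc_nat (n : nat) : seq bool :=
  if n == 0%N then [:: false] else bin_aux n n.

Definition pad (m : nat) (l : seq bool) : seq bool := nseq (m - size l) false ++ l.

Definition interleave (l1 l2 : seq bool) : seq bool :=
  flatten [seq [:: x.1; x.2] | x <- zip l1 l2].

(* rational r = (2s-1) p / q in lowest terms: sign bit s, then <p,q>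
   padded to equal length and interleaved *)
Definition enc_rat (r : rat) : seq bool :=
  let bp := enc_nat `|numq r|%N in
  let bq := enc_nat `|denq r|%N in
  let m := maxn (size bp) (size bq) in
  (0 <= r) :: interleave (pad m bp) (pad m bq).

(* self-delimiting encoding of a tuple of bit strings: every bit doubled,
   each component terminated by the separator 01 *)
Definition enc_tuple (s : seq (seq bool)) : seq bool :=
  flatten [seq flatten [seq [:: b; b] | b <- x] ++ [:: false; true] | x <- s].

Definition enc_ratseq (s : seq rat) : seq bool := enc_tuple (map enc_rat s).

Definition rowseq (k : nat) (v : 'rV[rat]_k) : seq rat := [seq v ord0 j | j <- enum 'I_k].

Definition enc_vec (k : nat) (v : 'rV[rat]_k) : seq bool := enc_ratseq (rowseq v).

(* an input pair (sigma, i) in Sigma x N, with Sigma = {0,1} *)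
Definition enc_pos (x : bool * nat) : seq bool := enc_tuple [:: [:: x.1]; enc_nat x.2].

Definition size_preserving (A B : Type) (encA : A -> seq bool) (encB : B -> seq bool)
  (f : A -> B) : Prop :=
  exists c N : nat, forall x, (N <= size (encA x))%N ->
    (size (encB (f x)) <= c * size (encA x))%N.

Definition amax (a : seq rat) : rat := foldr Num.max (head 0 a) a.

Definition saturated (a : seq rat) (j : nat) : rat :=
  if nth 0 a j == amax a then (count (pred1 (amax a)) a)%:R^-1 else 0.

Record transformer := Transformer {
  tk : nat;                                    (* model dimension *)
  tL : nat;                                    (* number of layers *)
  tH : nat;                                    (* heads per layer *)
  emb : bool * nat -> 'rV[rat]_tk;
  score : nat -> 'I_tH -> 'rV[rat]_tk -> 'rV[rat]_tk -> rat;
  act : nat -> 'rV[rat]_tk * (tH.-tuple 'rV[rat]_tk) -> 'rV[rat]_tk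
                                               (* act l = f_{l+1}, l < L *)
}.

Arguments emb : clear implicits.
Arguments score : clear implicits.
Arguments act : clear implicits.

Definition enc_act_in (k H : nat) (x : 'rV[rat]_k * (H.-tuple 'rV[rat]_k)) : seq bool :=
  enc_ratseq (rowseq x.1 ++ flatten (map (@rowseq k) x.2)).

Definition sizepres_transformer (T : transformer) : Prop :=
  size_preserving enc_pos (@enc_vec (tk T)) (emb T) /\
  forall l, (l < tL T)%N ->
    size_preserving (@enc_act_in (tk T) (tH T)) (@enc_vec (tk T)) (act T l).

Definition head_out (k : nat) (s : 'rV[rat]_k -> 'rV[rat]_k -> rat)
  (vs : seq 'rV[rat]_k) (vi : 'rV[rat]_k) : 'rV[rat]_k :=
  let a := [seq s vi vj | vj <- vs] in
  \sum_(j < size vs) saturated a j *: nth 0 vs j.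

Definition layer (T : transformer) (l : nat) (vs : seq 'rV[rat]_(tk T)) :
  seq 'rV[rat]_(tk T) :=
  [seq act T l (vi, [tuple head_out (score T l h) vs vi | h < tH T]) | vi <- vs].

Fixpoint run (T : transformer) (l : nat) (vs : seq 'rV[rat]_(tk T)) :
  seq 'rV[rat]_(tk T) :=
  match l with 0 => vs | l'.+1 => @layer T l' (run l' vs) end.

(* v_{0,i} = phi(w_i, i), positions numbered from 1 *)
Definition input_vecs (T : transformer) (w : seq bool) : seq 'rV[rat]_(tk T) :=
  [seq emb T (nth false w i, i.+1) | i <- iota 0 (size w)].

(* v_{L,1}(w); for the empty word (no position 1) the zero vector is used *)
Definition output (T : transformer) (w : seq bool) : 'rV[rat]_(tk T) :=
  head 0 (@run T (tL T) (input_vecs T w)).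

Definition dotr (k : nat) (W v : 'rV[rat]_k) : rat := \sum_(i < k) W ord0 i * v ord0 i.

Definition recognizes (T : transformer) (L : seq bool -> Prop) : Prop :=
  exists (W : 'rV[rat]_(tk T)) (b : rat),
    forall w : seq bool, 0 < dotr W (output T w) + b <-> L w.

Definition in_Ts_Q (L : seq bool -> Prop) : Prop :=
  exists T : transformer, sizepres_transformer T /\ recognizes T L.

From mathcomp Require Import all_boot all_order all_algebra.
From mathcomp Require Import zify ring lra.
From Stdlib Require Import ClassicalEpsilon.

Set Implicit Arguments.
Unset Strict Implicit.
Unset Printing Implicit Defensive.

Import Order.TTheory GRing.Theory Num.Theory.

(* One layer with one head and constant attention scores: saturated attention
   then averages the position embeddings.  Position i carries [i = 1] and
   sigma_i / p_i, with p_i the i-th prime, so on a word of length n the average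
   is (1/n, (1/n) sum_i sigma_i / p_i).  This determines the word: if two words
   of length n differed, then at the largest index m where they differ, clearing
   denominators would make p_m divide the product of the p_i with i < m.  Hence
   the activation, which may be any size-preserving function, can output +1 or -1
   according to whether the average comes from a nonempty word of L, and the bias
   decides the empty word, whose output is the zero vector.  The embedding is
   size-preserving because p_i has O(log i) bits, by Chebyshev's bound
   2^m <= C(2m, m) <= (2m)^pi(2m). *)

Definition primes_upto (N : nat) : seq nat := [seq p <- iota 0 N.+1 | prime p].

Lemma expn2_le_binom_double m : 2 ^ m <= 'C(m.*2, m).
Proof.
elim: m => [//|m IHm].
have le_binS : 'C(m.*2, m) <= 'C(m.*2.+1, m).
  by case: m {IHm} => [//|m]; rewrite binS leq_addr.
rewrite -(@leq_pmul2l m.+1) // expnS doubleS.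
rewrite -[in X in _ <= X]mul_bin_diag /= -doubleS -mul2n mulnCA -mulnA !leq_pmul2l //.
exact: leq_trans IHm le_binS.
Qed.

Lemma sum_div_expn_trunc p n a : 1 < p -> trunc_log p n < a ->
  \sum_(1 <= k < a) n %/ p ^ k = \sum_(1 <= k < (trunc_log p n).+1) n %/ p ^ k.
Proof.
move=> p_gt1 lt_a; rewrite (big_cat_nat _ (n := (trunc_log p n).+1)) //=.
rewrite [X in _ + X]big1_seq ?addn0 // => k /andP[_]; rewrite mem_index_iota.
case/andP=> lt_k _; rewrite divn_small //.
by rewrite (leq_trans (trunc_log_ltn n p_gt1)) // leq_exp2l.
Qed.

Lemma logn_fact_trunc p n t : prime p -> trunc_log p n <= t ->
  logn p n`! = \sum_(1 <= k < t.+1) n %/ p ^ k.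
Proof.
move=> p_pr le_t; have p_gt1 := prime_gt1 p_pr.
have le_n : trunc_log p n <= n.
  have [-> | n_gt0] := posnP n; first by rewrite trunc_log0.
  exact: leq_trans (ltnW (ltn_expl _ p_gt1)) (trunc_logP p_gt1 n_gt0).
by rewrite logn_fact // !sum_div_expn_trunc.
Qed.

Lemma div_double_leq m q : 0 < q -> m.*2 %/ q <= (m %/ q).*2.+1.
Proof. move=> q_gt0; nia. Qed.

Lemma logn_binom_double p m :
  prime p -> logn p 'C(m.*2, m) <= trunc_log p m.*2.
Proof.
move=> p_pr; set t := trunc_log p m.*2.
have le_m2 : m <= m.*2 by rewrite -addnn leq_addr.
have := congr1 (logn p) (bin_fact le_m2).
rewrite -addnn addnK addnn !lognM ?muln_gt0 ?fact_gt0 ?bin_gt0 //.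
have le_tm : trunc_log p m <= t by exact: leq_trunc_log.
rewrite !(@logn_fact_trunc p _ t) // => eq_logn.
have le_sum : \sum_(1 <= k < t.+1) m.*2 %/ p ^ k <=
              \sum_(1 <= k < t.+1) (m %/ p ^ k + m %/ p ^ k + 1).
  apply: leq_sum => k _.
  by rewrite addnn addn1 div_double_leq // expn_gt0 prime_gt0.
rewrite !big_split sum_nat_const_nat /= in le_sum; lia.
Qed.

Lemma expn_logn_binom_double p m : 0 < m -> p ^ logn p 'C(m.*2, m) <= m.*2.
Proof.
move=> m_gt0; have [p_pr | /negPf p_npr] := boolP (prime p); last first.
  by rewrite lognE p_npr double_gt0.
apply: leq_trans (trunc_logP (prime_gt1 p_pr) _); last by rewrite double_gt0.
by rewrite leq_exp2l ?prime_gt1 // logn_binom_double.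
Qed.

Lemma binom_double_le m : 'C(m.*2, m) <= m.*2 ^ size (primes_upto m.*2).
Proof.
have [-> // | m_gt0] := posnP m.
have C_gt0 : 0 < 'C(m.*2, m) by rewrite bin_gt0 -addnn leq_addr.
rewrite {1}(prod_prime_decomp C_gt0) prime_decompE big_map /=.
apply: (@leq_trans (\prod_(p <- primes 'C(m.*2, m)) m.*2)).
  by apply: leq_prod => p _; apply: expn_logn_binom_double.
rewrite big_const_seq count_predT iter_muln_1 leq_pexp2l ?double_gt0 //.
apply: uniq_leq_size (primes_uniq _) _ => p p_in.
have v_gt0 : 0 < logn p 'C(m.*2, m) by rewrite logn_gt0.
move: p_in; rewrite mem_primes mem_filter mem_iota ltnS => /and3P[p_pr _ _].
rewrite p_pr /= (leq_trans _ (expn_logn_binom_double p m_gt0)) //.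
by rewrite -{1}(expn1 p) leq_exp2l ?prime_gt1.
Qed.

Lemma expn2_le_size_primes_upto s :
  0 < s -> 2 ^ s.-1 <= s * size (primes_upto (2 ^ s)).
Proof.
move=> s_gt0; set m := 2 ^ s.-1.
have m2E : m.*2 = 2 ^ s by rewrite -mul2n -expnS prednK.
have := leq_trans (expn2_le_binom_double m) (binom_double_le m).
by rewrite m2E -expnM leq_exp2l.
Qed.

Lemma ltn_size_primes_upto l i : i < 2 ^ l -> i < size (primes_upto (4 ^ l.+2)).
Proof.
move=> lt_i; rewrite -[4]/(2 ^ 2) -expnM.
have := @expn2_le_size_primes_upto (2 * l.+2) isT.
have -> : 2 ^ (2 * l.+2).-1 = 2 ^ l.+3 * 2 ^ l by rewrite -expnD; congr (2 ^ _); lia.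
have lt_l : 2 * l.+2 < 2 ^ l.+3 by rewrite expnS ltn_pmul2l // ltn_expl.
move=> le_n; rewrite ltnNge; apply/negP => le_ni.
have : 2 ^ l.+3 * 2 ^ l <= 2 ^ l.+3 * i.
  apply: leq_trans le_n _; apply: leq_mul (ltnW lt_l) le_ni.
by rewrite leq_pmul2l ?expn_gt0 // leqNgt lt_i.
Qed.

Lemma primes_upto_cat M N : M <= N ->
  primes_upto N = primes_upto M ++ [seq p <- iota M.+1 (N - M) | prime p].
Proof.
by move=> le_MN; rewrite /primes_upto -(subnKC le_MN) -addSn iotaD filter_cat addKn.
Qed.

Definition nth_prime (i : nat) : nat := nth 0 (primes_upto (4 ^ (trunc_log 2 i).+3)) i.

Lemma ltn_size_primes_upto_nth i : i < size (primes_upto (4 ^ (trunc_log 2 i).+3)).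
Proof. exact/ltn_size_primes_upto/trunc_log_ltn. Qed.

Lemma nth_primeE N i : i < size (primes_upto N) -> nth_prime i = nth 0 (primes_upto N) i.
Proof.
have := ltn_size_primes_upto_nth i; rewrite /nth_prime.
case: (leqP N (4 ^ (trunc_log 2 i).+3)) => [le_N | /ltnW le_N] lt_i lt_iN.
  by rewrite (primes_upto_cat le_N) nth_cat lt_iN.
by rewrite (primes_upto_cat le_N) nth_cat lt_i.
Qed.

Lemma nth_prime_mem i : nth_prime i \in primes_upto (4 ^ (trunc_log 2 i).+3).
Proof. exact/mem_nth/ltn_size_primes_upto_nth. Qed.

Lemma nth_prime_prime i : prime (nth_prime i).
Proof. by have := nth_prime_mem i; rewrite mem_filter => /andP[]. Qed.

Lemma trunc_log_nth_prime i : trunc_log 2 (nth_prime i) <= ((trunc_log 2 i).+3).*2.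
Proof.
have := nth_prime_mem i; rewrite mem_filter mem_iota ltnS => /and3P[_ _ le_p].
by rewrite -(@trunc_expnK 2 _.*2) // -mul2n expnM leq_trunc_log.
Qed.

Lemma nth_prime_inj : injective nth_prime.
Proof.
move=> i j; set N := maxn (4 ^ (trunc_log 2 i).+3) (4 ^ (trunc_log 2 j).+3).
have lt_N k : 4 ^ (trunc_log 2 k).+3 <= N -> k < size (primes_upto N).
  move=> /primes_upto_cat->; rewrite size_cat.
  exact: leq_trans (ltn_size_primes_upto_nth k) (leq_addr _ _).
rewrite !(@nth_primeE N) ?lt_N ?leq_maxl ?leq_maxr //.
by move/eqP; rewrite nth_uniq ?lt_N ?leq_maxl ?leq_maxr ?filter_uniq ?iota_uniq // => /eqP.
Qed.

Lemma size_bin_aux f n : 0 < n <= f -> size (bin_aux f n) = (trunc_log 2 n).+1.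
Proof.
elim: f n => [|f IHf] [|[|n]] //= le_nf; rewrite size_rcons.
  by rewrite trunc_log1; case: f {IHf le_nf}.
by rewrite IHf ?(trunc_log2S (isT : 1 < n.+2)) //= ltn_half_double; lia.
Qed.

Lemma size_enc_nat n : size (enc_nat n) = (trunc_log 2 n).+1.
Proof.
rewrite /enc_nat; case: eqP => [-> // | /eqP]; rewrite -lt0n => n_gt0.
by rewrite size_bin_aux // n_gt0 leqnn.
Qed.

Lemma size_interleave l1 l2 : size l1 = size l2 -> size (interleave l1 l2) = (size l1).*2.
Proof. by elim: l1 l2 => [|x l1 IHl] [|y l2] //= [/IHl->]. Qed.

Lemma size_pad m l : size l <= m -> size (pad m l) = m.
Proof. by move=> le_lm; rewrite size_cat size_nseq subnK. Qed.

Lemma size_enc_rat r : size (enc_rat r) =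
  (maxn (trunc_log 2 `|numq r|) (trunc_log 2 `|denq r|)).+1.*2.+1.
Proof.
by rewrite /= size_interleave !size_pad ?leq_maxl ?leq_maxr // !size_enc_nat maxnSS.
Qed.

Local Open Scope ring_scope.

Lemma size_enc_rat_invn (n : nat) :
  (0 < n)%N -> size (enc_rat n%:R^-1) = ((trunc_log 2 n).+1.*2.+1)%N.
Proof.
move=> n_gt0; have nE : n%:R^-1 = 1%:~R / n%:~R :> rat by rewrite div1r.
rewrite nE size_enc_rat coprimeq_num ?coprimeq_den ?coprime1n //.
by rewrite gtr0_sg ?ltz_nat // mulr1 eqz_nat gtn_eqF //= trunc_log1 max0n.
Qed.

Lemma size_enc_tuple s : size (enc_tuple s) = sumn [seq (size x).*2 + 2 | x <- s].
Proof.
elim: s => [// | x s IHs]; rewrite /enc_tuple /= size_cat -/(enc_tuple s) IHs size_cat /=.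
suff -> : size (flatten [seq [:: b; b] | b <- x]) = (size x).*2 by rewrite -addnA.
by elim: x => [// | b x /= ->].
Qed.

Lemma size_enc_vec_le k (v : 'rV[rat]_k) B :
  (forall j, size (enc_rat (v ord0 j)) <= B)%N -> (size (enc_vec v) <= k * (B.*2 + 2))%N.
Proof.
move=> le_B; rewrite /enc_vec /enc_ratseq size_enc_tuple sumnE !big_map.
apply: (@leq_trans (\sum_(j < k) (B.*2 + 2))); last by rewrite sum_nat_const card_ord.
by apply: leq_sum => j _; rewrite leq_add2r leq_double.
Qed.

Section PrimeReciprocalSums.

Variable p : nat -> nat.
Hypothesis p_prime : forall j, prime (p j).
Hypothesis p_inj : injective p.

Lemma natr_p_neq0 j : (p j)%:R != 0 :> rat.
Proof. by rewrite pnatr_eq0 -lt0n prime_gt0. Qed.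

Lemma recip_sum_mul_prod n (b : nat -> bool) : exists N : nat,
  (\sum_(j < n) (b j)%:R / (p j)%:R) * (\prod_(j < n) p j)%:R = N%:R :> rat.
Proof.
elim: n => [|n [N IHn]]; first by exists 0%N; rewrite !big_ord0 mul0r.
exists (N * p n + b n * \prod_(j < n) p j)%N.
rewrite !big_ord_recr /= !natrM natrD !natrM -IHn.
by field; apply: natr_p_neq0.
Qed.

Lemma recip_sum_addr_neq n (b c : nat -> bool) :
  \sum_(j < n) (b j)%:R / (p j)%:R + (p n)%:R^-1 != \sum_(j < n) (c j)%:R / (p j)%:R :> rat.
Proof.
apply/eqP => eq_sum.
have [Nb eq_b] := recip_sum_mul_prod n b; have [Nc eq_c] := recip_sum_mul_prod n c.
set P := (\prod_(j < n) p j)%N in eq_b eq_c.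
have : (Nb * p n + P)%:R = (Nc * p n)%N%:R :> rat.
  rewrite natrD !natrM -eq_b -eq_c -eq_sum; field; exact: natr_p_neq0.
move/eqP; rewrite eqr_nat => /eqP eq_nat.
have : (p n %| P)%N by rewrite -(dvdn_addr _ (dvdn_mull Nb (dvdnn _))) eq_nat dvdn_mull.
rewrite Euclid_dvd_prod // big_orE => /existsP[j].
by rewrite dvdn_prime2 // => /eqP/p_inj eq_nj; have := ltn_ord j; rewrite -eq_nj ltnn.
Qed.

Lemma recip_sum_inj n (b c : nat -> bool) :
  \sum_(j < n) (b j)%:R / (p j)%:R = \sum_(j < n) (c j)%:R / (p j)%:R :> rat ->
  forall j, (j < n)%N -> b j = c j.
Proof.
elim: n => [// | n IHn]; rewrite !big_ord_recr /=.
have [eq_bc eq_sum j | neq_bc] := eqVneq (b n) (c n).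
  move: eq_sum; rewrite eq_bc => /addIr eq_sum; rewrite ltnS leq_eqVlt.
  by case/orP=> [/eqP-> | /IHn]; last exact.
case: (b n) (c n) neq_bc => [] [] // _; rewrite mul1r mul0r addr0.
  by move/eqP; rewrite (negPf (recip_sum_addr_neq _ _ _)).
by move/esym/eqP; rewrite (negPf (recip_sum_addr_neq _ _ _)).
Qed.

End PrimeReciprocalSums.

Lemma saturated_const (T : Type) (s : seq T) (c : rat) j :
  (j < size s)%N -> saturated [seq c | _ <- s] j = (size s)%:R^-1.
Proof.
have -> : [seq c | _ <- s] = nseq (size s) c by elim: s => //= x s ->.
move: (size s) => n lt_jn; have amaxE : amax (nseq n c) = c.
  by rewrite /amax; case: n lt_jn => [// | n] _ /=; elim: n => [|n /= ->]; rewrite maxxx.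
by rewrite /saturated amaxE nth_nseq lt_jn eqxx count_nseq /= eqxx mul1n.
Qed.

Definition mean k (vs : seq 'rV[rat]_k) : 'rV[rat]_k := (size vs)%:R^-1 *: \sum_(v <- vs) v.

Lemma head_out_const k (c : rat) (vs : seq 'rV[rat]_k) vi :
  head_out (fun _ _ => c) vs vi = mean vs.
Proof.
rewrite /head_out /mean (big_nth 0) big_mkord scaler_sumr.
by apply: eq_bigr => j _; rewrite saturated_const.
Qed.

Definition pos_emb (x : bool * nat) : 'rV[rat]_2 :=
  \row_(j < 2) if j == ord0 then (x.2 == 1)%:R else x.1%:R / (nth_prime x.2)%:R.

Definition emb_seq (w : seq bool) : seq 'rV[rat]_2 :=
  [seq pos_emb (nth false w i, i.+1) | i <- iota 0 (size w)].

Lemma mean_emb_seqE w c : mean (emb_seq w) ord0 c =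
  (size w)%:R^-1 * \sum_(j < size w) pos_emb (nth false w j, j.+1) ord0 c.
Proof.
rewrite mxE summxE big_map size_map size_iota.
have -> : iota 0 (size w) = index_iota 0 (size w) by rewrite /index_iota subn0.
by rewrite big_mkord.
Qed.

Lemma mean_emb_seq_inj w1 w2 : w1 != [::] -> w2 != [::] ->
  mean (emb_seq w1) = mean (emb_seq w2) -> w1 = w2.
Proof.
move=> w1_neq0 w2_neq0 eq_mean.
have coord0 w : w != [::] -> mean (emb_seq w) ord0 ord0 = (size w)%:R^-1.
  case: w => [// | b w] _; rewrite mean_emb_seqE big_ord_recl big1 ?mxE ?eqxx ?mulr1 ?addr0 //.
  by move=> j _; rewrite mxE.
have coord1 w : mean (emb_seq w) ord0 ord_max =
    (size w)%:R^-1 * \sum_(j < size w) (nth false w j)%:R / (nth_prime j.+1)%:R.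
  by rewrite mean_emb_seqE; congr (_ * _); apply: eq_bigr => j _; rewrite mxE.
have size_eq : size w1 = size w2.
  have := congr1 (fun v : 'rV_2 => v ord0 ord0) eq_mean; rewrite /= !coord0 //.
  by move/invr_inj/eqP; rewrite eqr_nat => /eqP.
have size_neq0 : (size w1)%:R^-1 != 0 :> rat by rewrite invr_eq0 pnatr_eq0 size_eq0.
have := congr1 (fun v : 'rV_2 => v ord0 ord_max) eq_mean.
rewrite /= !coord1 -size_eq => /(mulfI size_neq0) eq_sum.
apply: (eq_from_nth (x0 := false) size_eq) => j.
have succ_prime i : prime (nth_prime i.+1) by apply: nth_prime_prime.
exact: (@recip_sum_inj (fun i => nth_prime i.+1) succ_prime
          (inj_comp nth_prime_inj succn_inj) _ _ _ eq_sum j).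
Qed.

Definition sign_of (P : Prop) : rat := if excluded_middle_informative P then 1 else -1.

Lemma sign_of_iff P Q : (P <-> Q) -> sign_of P = sign_of Q.
Proof.
rewrite /sign_of => PQ.
case: excluded_middle_informative => [HP | notP]; case: excluded_middle_informative => // HQ.
- by case: HQ; apply/PQ.
- by case: notP; apply/PQ.
Qed.

Lemma sign_of_half_gt0 P : 0 < sign_of P / 2 <-> P.
Proof. by rewrite /sign_of; case: excluded_middle_informative => ?; split => //; lra. Qed.

Lemma sign_of_add_half_gt0 P Q : 0 < sign_of P + sign_of Q / 2 <-> P.
Proof.
rewrite /sign_of; do 2 case: excluded_middle_informative => ? //; split => //; lra.
Qed.

Definition classify (L : seq bool -> Prop) (x : 'rV[rat]_2 * 1.-tuple 'rV[rat]_2) :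
  'rV[rat]_2 :=
  let in_L := exists2 w, w != [::] & L w /\ mean (emb_seq w) = tnth x.2 ord0 in
  \row_(j < 2) if j == ord0 then sign_of in_L else 0.

Lemma classify_mean L v t w : w != [::] -> tnth t ord0 = mean (emb_seq w) ->
  classify L (v, t) ord0 ord0 = sign_of (L w).
Proof.
move=> w_neq0 mean_t; rewrite mxE eqxx /= mean_t; apply: sign_of_iff; split.
  by case=> w' w'_neq0 [Lw' /mean_emb_seq_inj <-].
by move=> Lw; exists w.
Qed.

Definition mean_transformer (L : seq bool -> Prop) : transformer :=
  @Transformer 2 1 1 pos_emb (fun _ _ _ _ => 0) (fun _ => classify L).

Lemma output_mean_transformer L w : w != [::] ->
  output (mean_transformer L) w ord0 ord0 = sign_of (L w).
Proof.
case: w => [// | b w] w_neq0; apply: classify_mean => //=.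
by rewrite tnth_mktuple head_out_const.
Qed.

Lemma dotr_delta_mx k (i : 'I_k) (v : 'rV[rat]_k) : dotr (delta_mx 0 i) v = v ord0 i.
Proof.
rewrite /dotr (bigD1 i) //= big1 => [|j /negPf j_neq_i]; rewrite !mxE ?eqxx ?j_neq_i /=.
  by rewrite mul1r addr0.
by rewrite mul0r.
Qed.

Lemma size_pos_emb x : (size (enc_vec (pos_emb x)) <= 8 * size (enc_pos x))%N.
Proof.
case: x => b i; set t := trunc_log 2 i.
have -> : size (enc_pos (b, i)) = (t.*2 + 8)%N.
  by rewrite /enc_pos size_enc_tuple /= size_enc_nat; lia.
apply: leq_trans (@size_enc_vec_le _ _ (t.*2.*2 + 15) _) _; last by lia.
move=> j; rewrite mxE; case: (j == ord0); first by case: (i == 1%N) => /=; lia.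
case: b; rewrite [(_, _).1]/= [(_, _).2]/=; last by rewrite mul0r /=; lia.
rewrite mul1r size_enc_rat_invn ?prime_gt0 ?nth_prime_prime //.
have := trunc_log_nth_prime i; rewrite -/t; lia.
Qed.

Lemma size_classify L x : (size (enc_vec (classify L x)) <= 16)%N.
Proof.
apply: leq_trans (@size_enc_vec_le _ _ 3 _) _ => // j.
by rewrite mxE; case: (j == ord0); rewrite // /sign_of; case: excluded_middle_informative.
Qed.

Theorem proposition1 : forall L : seq bool -> Prop, in_Ts_Q L.
Proof.
move=> L; exists (mean_transformer L); split.
  split=> [|l _]; first by exists 8%N, 0%N => x _; apply: size_pos_emb.
  exists 16%N, 1%N => x size_gt0.
  by apply: leq_trans (size_classify L x) _; rewrite leq_pmulr.
exists (delta_mx 0 ord0), (sign_of (L [::]) / 2) => w.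
rewrite dotr_delta_mx; case: w => [|b w]; first by rewrite mxE add0r sign_of_half_gt0.
by rewrite output_mean_transformer // sign_of_add_half_gt0.
Qed.
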